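(* Let $T\in(0,\infty)$ and $Q\in\mathbb N$. Then for all $n\in\mathbb N_0$ and $k\in\mathbb N_0\cap[0,2Q-n)$, $$\sum_{t\in[0,T]}\bar q^{n,Q}(t)\,\frac{(T-t)^k}{k!}=\frac{T^{n+k}}{(n+k)!}.$$
   Context: For $n\in\mathbb N$ let $c^n_1,\dots,c^n_n\in[-1,1]$ be the $n$ distinct roots of $x\mapsto\frac{1}{2^nn!}\frac{d^n}{dx^n}[(x^2-1)^n]$. For $a\in\mathbb R$, $b\in[a,\infty)$ let $q^{n,[a,b]}\colon[a,b]\to\mathbb R$ be $q^{n,[a,b]}(t)=\int_a^b\prod_{i:\,c^n_i\neq\frac{2t-(a+b)}{b-a}}\frac{2x-(b-a)c^n_i-(a+b)}{2t-(b-a)c^n_i-(a+b)}\,dx$ if $a<b$ and $\frac{2t-(a+b)}{b-a}\in\{c^n_1,\dots,c^n_n\}$, and $q^{n,[a,b]}(t)=0$ otherwise. Sums $\sum_{t\in[a,b]}$ range over the finitely many points with nonzero weight. For $Q\in\mathbb N$ define $\bar q^{n,Q}\colon[0,T]\to\mathbb R$ by $\bar q^{0,Q}(t)=\mathbb 1_{\{0\}}(t)$ and $\bar q^{n,Q}(t)=\sum_{s\in[0,t]}\bar q^{n-1,Q}(s)\,q^{Q,[s,T]}(t)$ for $n\in\mathbb N$. *)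

From HB Require Import structures.
From mathcomp Require Import all_boot all_order all_algebra.
From mathcomp Require Import all_classical all_reals all_analysis.
Set Implicit Arguments. Unset Strict Implicit. Unset Printing Implicit Defensive.
Import Order.TTheory GRing.Theory Num.Theory.
Import numFieldNormedType.Exports.
Local Open Scope classical_set_scope.
Local Open Scope ring_scope.

Section GL.
Variable R : realType.

Definition legendre (n : nat) : {poly R} :=
  ((2 ^ n * n`!)%:R)^-1 *: (('X ^+ 2 - 1) ^+ n)^`(n).

Definition legendre_roots (n : nat) : set R := [set c | root (legendre n) c].

Definition glq (n : nat) (a b t : R) : R :=
  let x := (2 * t - (a + b)) / (b - a) in
  if (a < b) && root (legendre n) x then
    Rintegral (@lebesgue_measure R) `[a, b]
      (fun y => \big[*%R/1]_(c \in legendre_roots n `\ x)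
          ((2 * y - (b - a) * c - (a + b)) / (2 * t - (b - a) * c - (a + b))))
  else 0.

Fixpoint qbar (T : R) (Q : nat) (n : nat) : R -> R :=
  match n with
  | 0%N => fun t => if t == 0 then 1 else 0
  | m.+1 => fun t => \sum_(s \in `[0, t]) (qbar T Q m s * glq Q s T t)
  end.

End GL.

(* Gauss-Legendre quadrature with Q nodes is exact for polynomials of degree
   < 2Q: dividing by the Legendre polynomial P_Q, the quotient integrates to
   zero against P_Q (Rodrigues' formula and repeated integration by parts), and
   the remainder is reproduced by Lagrange interpolation at the Q roots of P_Q,
   which are simple and lie in [-1, 1] by repeated use of Rolle's theorem.
   Passing from \bar q^n to \bar q^{n+1} applies one such quadrature on [s, T]
   from every node s of \bar q^n; on t |-> (T - t)^k / k!, of degree k < 2Q,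
   it returns exactly (T - s)^(k+1) / (k+1)!, so the claim follows by induction
   on n with k + 1 in place of k. *)

From HB Require Import structures.
From mathcomp Require Import all_boot all_order all_algebra.
From mathcomp Require Import all_classical all_reals all_analysis.
From mathcomp Require Import zify ring lra.
Import Order.TTheory GRing.Theory Num.Theory.
Import numFieldNormedType.Exports.
Local Open Scope classical_set_scope.
Local Open Scope ring_scope.

Set Implicit Arguments.
Unset Strict Implicit.
Unset Printing Implicit Defensive.

Section PolyIntegral.
Variable R : numFieldType.
Implicit Types (p q F : {poly R}) (a b c : R).

Definition poly_prim p : {poly R} :=
  \poly_(i < (size p).+1) (if i is j.+1 then p`_j / j.+1%:R else 0).

Lemma deriv_poly_prim p : (poly_prim p)^`() = p.
Proof.
apply/polyP => i; rewrite coef_deriv coef_poly; case: ltnP => [_|ip].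
  by rewrite -[_ *+ i.+1]mulr_natr divfK // pnatr_eq0.
by rewrite mul0rn nth_default // -ltnS.
Qed.

Lemma deriv_eq0_const p : p^`() = 0 -> p = (p`_0)%:P.
Proof.
move=> dp0; apply/polyP => -[|i]; rewrite coefC //=.
have /eqP := congr1 (fun r : {poly R} => r`_i) dp0.
by rewrite coef_deriv coef0 mulrn_eq0 /= => /eqP.
Qed.

Definition poly_integral a b p := (poly_prim p).[b] - (poly_prim p).[a].

Lemma poly_integral_antider F p a b :
  F^`() = p -> poly_integral a b p = F.[b] - F.[a].
Proof.
move=> dF; have /deriv_eq0_const : (poly_prim p - F)^`() = 0.
  by rewrite derivB deriv_poly_prim dF subrr.
rewrite /poly_integral => /(canRL (subrK F)) ->.
by rewrite !(hornerD, hornerC) opprD addrACA subrr add0r.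
Qed.

Lemma poly_integralD a b : {morph poly_integral a b : p q / p + q}.
Proof.
move=> p q; rewrite (@poly_integral_antider (poly_prim p + poly_prim q)).
  by rewrite /poly_integral !hornerD opprD addrACA.
by rewrite derivD !deriv_poly_prim.
Qed.

Lemma poly_integralZ a b c p : poly_integral a b (c *: p) = c * poly_integral a b p.
Proof.
rewrite (@poly_integral_antider (c *: poly_prim p)) ?derivZ ?deriv_poly_prim //.
by rewrite /poly_integral !hornerZ mulrBr.
Qed.

Lemma poly_integral0 a b : poly_integral a b 0 = 0.
Proof. by rewrite -(scale0r 0) poly_integralZ mul0r. Qed.

Lemma poly_integral_sum a b (I : Type) (s : seq I) (P : pred I) (f : I -> {poly R}) :
  poly_integral a b (\sum_(i <- s | P i) f i) = \sum_(i <- s | P i) poly_integral a b (f i).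
Proof. exact: (big_morph _ (@poly_integralD a b) (poly_integral0 a b)). Qed.

Lemma poly_integral_parts a b p q :
  poly_integral a b (p^`() * q) = (p * q).[b] - (p * q).[a] - poly_integral a b (p * q^`()).
Proof.
by rewrite -(@poly_integral_antider (p * q) _ a b (erefl _)) derivM poly_integralD addrK.
Qed.

Lemma poly_integral_comp a b c d p : c != 0 ->
  poly_integral a b (p \Po (c *: 'X + d%:P)) = c^-1 * poly_integral (c * a + d) (c * b + d) p.
Proof.
move=> c0; rewrite (@poly_integral_antider (c^-1 *: (poly_prim p \Po (c *: 'X + d%:P)))).
  by rewrite /poly_integral !hornerZ !horner_comp !hornerE mulrBr.
rewrite derivZ deriv_comp deriv_poly_prim derivD derivC derivZ derivX addr0.
by rewrite -scalerAr scalerA mulVf // scale1r mulr1.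
Qed.

Definition divided_pow b k : {poly R} := (k`!%:R)^-1 *: (b%:P - 'X) ^+ k.

Lemma horner_divided_pow b k t : (divided_pow b k).[t] = (b - t) ^+ k / k`!%:R.
Proof. by rewrite hornerZ horner_exp !hornerE mulrC. Qed.

Lemma size_divided_pow b k : (size (divided_pow b k) <= k.+1)%N.
Proof.
rewrite (leq_trans (size_scale_leq _ _)) // -opprB -scaleN1r exprZn.
by rewrite (leq_trans (size_scale_leq _ _)) // size_exp_XsubC.
Qed.

Lemma poly_integral_divided_pow a b k :
  poly_integral a b (divided_pow b k) = (divided_pow b k.+1).[a].
Proof.
rewrite (@poly_integral_antider (- divided_pow b k.+1)).
  by rewrite !hornerN !horner_divided_pow subrr expr0n mul0r oppr0 sub0r opprK.
rewrite derivN derivZ deriv_exp derivB derivC derivX sub0r mulN1r mulNrn.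
rewrite scalerN opprK -scalerMnr scalerMnl /divided_pow; congr (_ *: _).
by rewrite factS natrM invfM -mulr_natr mulrC mulrA mulfV ?mul1r.
Qed.

End PolyIntegral.

Lemma Rintegral_horner (R : realType) (a b : R) (p : {poly R}) : a < b ->
  Rintegral lebesgue_measure `[a, b] (horner p) = poly_integral a b p.
Proof.
move=> ab; rewrite /Rintegral (continuous_FTC2 ab (F := horner (poly_prim p))) //.
- by apply: continuous_subspaceT => x; exact: continuous_horner.
- split; first by move=> x _; exact: derivable_horner.
  + by apply/cvg_at_right_filter; exact: continuous_horner.
  + by apply/cvg_at_left_filter; exact: continuous_horner.
- by move=> x _; rewrite -derivE deriv_poly_prim.
Qed.

Lemma dvdp_deriv_XsubC_exp (R : fieldType) (a : R) j (p : {poly R}) :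
  ('X - a%:P) ^+ j.+1 %| p -> ('X - a%:P) ^+ j %| p^`().
Proof.
case/dvdpP => q ->; rewrite derivM; apply: dvdp_add.
  by apply: dvdp_mull; rewrite exprS dvdp_mulIr.
rewrite deriv_exp -mulr_natr.
exact: (dvdp_mull _ (dvdp_mulr _ (dvdp_mull _ (dvdpp _)))).
Qed.

Section Rodrigues.
Variable R : numFieldType.
Implicit Types (q : {poly R}) (a : R).

Definition rodrigues_poly n : {poly R} := ('X ^+ 2 - 1) ^+ n.

Lemma rodrigues_polyE n : rodrigues_poly n = ('X - 1%:P) ^+ n * ('X - (-1)%:P) ^+ n.
Proof.
rewrite /rodrigues_poly -exprMn; congr (_ ^+ _).
by rewrite polyCN opprK polyC1; ring.
Qed.

Lemma dvdp_derivn_rodrigues n k a : (k <= n)%N -> a = 1 \/ a = -1 ->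
  ('X - a%:P) ^+ (n - k) %| (rodrigues_poly n)^`(k).
Proof.
move=> kn a1; elim: k kn => [|k IHk] kn.
  by rewrite subn0 derivn0 rodrigues_polyE; case: a1 => ->; [apply: dvdp_mulr | apply: dvdp_mull].
by rewrite derivnS; apply: dvdp_deriv_XsubC_exp; rewrite subnSK // IHk // ltnW.
Qed.

Lemma root_derivn_rodrigues n k a : (k < n)%N -> a = 1 \/ a = -1 ->
  root (rodrigues_poly n)^`(k) a.
Proof.
move=> kn a1; rewrite -dvdp_XsubCl.
apply: dvdp_trans (dvdp_derivn_rodrigues (ltnW kn) a1).
by rewrite -(subnSK kn) exprS dvdp_mulIl.
Qed.

Lemma size_rodrigues n : size (rodrigues_poly n) = (2 * n).+1.
Proof.
have := size_exp ('X ^+ 2 - 1 : {poly R}) n.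
rewrite size_Xn_sub_1 // /rodrigues_poly => <-; rewrite prednK // lt0n size_poly_eq0.
by rewrite expf_neq0 // -size_poly_eq0 size_Xn_sub_1.
Qed.

Lemma size_derivn_rodrigues n : size (rodrigues_poly n)^`(n) = n.+1.
Proof.
apply/anti_leq/andP; split.
  apply/leq_sizeP => j jn; rewrite coef_derivn nth_default ?mul0rn //.
  by rewrite size_rodrigues; lia.
have coef_n : (rodrigues_poly n)^`(n)`_n != 0.
  have /monicP : rodrigues_poly n \is monic by apply/monic_exp/monic_Xn_sub_1.
  rewrite coef_derivn addnn -mul2n lead_coefE size_rodrigues /= => ->.
  by rewrite mulrn_eq0 oner_eq0 orbF -lt0n ffact_gt0 mul2n -addnn leq_addr.
by rewrite ltnNge; apply: contra coef_n => /(nth_default 0) ->.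
Qed.

Lemma poly_integral_derivn_rodriguesM n k q : (k <= n)%N -> (size q <= k)%N ->
  poly_integral (-1) 1 ((rodrigues_poly n)^`(k) * q) = 0.
Proof.
elim: k q => [|k IHk] q kn sq.
  by move: sq; rewrite leqn0 size_poly_eq0 => /eqP->; rewrite mulr0 poly_integral0.
rewrite derivnS poly_integral_parts !hornerM.
rewrite (rootP (root_derivn_rodrigues kn (or_introl erefl))).
rewrite (rootP (root_derivn_rodrigues kn (or_intror erefl))) !mul0r subrr sub0r.
rewrite IHk ?oppr0 ?(ltnW kn) //.
have [->|q0] := eqVneq q 0; first by rewrite deriv0 size_poly0.
by rewrite -ltnS (leq_trans (lt_size_deriv q0)).
Qed.

End Rodrigues.

Section Legendre.
Variable R : realType.
Implicit Types (p q : {poly R}).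

Lemma poly_rolle p a b : a < b -> p.[a] = p.[b] ->
  exists2 c, c \in `]a, b[ & root p^`() c.
Proof.
move=> ab pab.
have [c cab dc] := Rolle ab (fun x _ => @derivable_horner R p x)
  (continuous_subspaceT (@continuous_horner R p)) pab.
by exists c => //; apply/rootP; rewrite derivE derive1E (@derive_val _ _ _ _ _ _ _ dc).
Qed.

Lemma rolle_sorted p x0 xs : path <%R x0 xs -> all (root p) (x0 :: xs) ->
  exists ys : seq R, [/\ size ys = size xs, sorted <%R ys, all (root p^`()) ys &
    all (fun y => x0 < y < last x0 xs) ys].
Proof.
elim: xs x0 => [|x1 xs IHxs] x0 /=; first by exists [::].
case/andP => x01 x1xs /and3P[px0 px1 pxs].
have [c /[!in_itv]/= /andP[x0c cx1] dc] := poly_rolle x01 (etrans (rootP px0) (esym (rootP px1))).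
have [|ys [sys oys dys bys]] := IHxs x1 x1xs; first by rewrite /= px1.
have x1_last : x1 <= last x1 xs.
  move: x1xs; rewrite lt_path_sortedE => /andP[/allP x1_lt _].
  by have /[1!inE] /orP[/eqP ->|/x1_lt/ltW] := mem_last x1 xs.
exists (c :: ys); split => /=; rewrite ?sys ?dc //.
- rewrite lt_path_sortedE oys andbT; apply/allP => y /(allP bys) /andP[+ _].
  exact: lt_trans.
- rewrite x0c (lt_le_trans cx1 x1_last) /=; apply/allP => y /(allP bys) /andP[x1y ->].
  by rewrite (lt_trans x01 x1y).
Qed.

Lemma derivn_rodrigues_roots n k : (k <= n)%N -> exists rs : seq R,
  [/\ size rs = k, sorted <%R rs, all (fun c => -1 < c < 1) rs &
      all (root (rodrigues_poly R n)^`(k)) rs].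
Proof.
elim: k => [|k IHk] kn; first by exists [::].
have [rs [srs ors brs rrs]] := IHk (ltnW kn).
have path_rs : path <%R (-1) (rs ++ [:: 1]).
  rewrite cat_path /= andbT lt_path_sortedE ors andbT.
  apply/andP; split; first by apply/allP => c /(allP brs) /andP[].
  have /[1!inE] /orP[/eqP->|/(allP brs)/andP[]//] := mem_last (-1) rs.
  by rewrite (@lt_trans _ _ 0) ?ltrN10 ?ltr01.
have roots_rs : all (root (rodrigues_poly R n)^`(k)) (-1 :: rs ++ [:: 1]).
  rewrite /= all_cat rrs /= !root_derivn_rodrigues //; by [right | left].
have [ys [sys oys dys bys]] := rolle_sorted path_rs roots_rs.
exists ys; split => //; first by rewrite sys size_cat srs addn1.
by move: bys; rewrite last_cat.
Qed.

Lemma legendre_rodrigues n :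
  legendre R n = ((2 ^ n * n`!)%:R)^-1 *: (rodrigues_poly R n)^`(n).
Proof. by []. Qed.

Lemma legendre_scale_neq0 n : ((2 ^ n * n`!)%:R : R)^-1 != 0.
Proof. by rewrite invr_eq0 pnatr_eq0 muln_eq0 expn_eq0 /= -lt0n fact_gt0. Qed.

Lemma size_legendre n : size (legendre R n) = n.+1.
Proof.
by rewrite legendre_rodrigues size_scale ?size_derivn_rodrigues ?legendre_scale_neq0.
Qed.

Lemma legendre_neq0 n : legendre R n != 0.
Proof. by rewrite -size_poly_eq0 size_legendre. Qed.

Lemma legendre_roots_spec n : exists rs : seq R,
  [/\ uniq rs, size rs = n, all (fun c => -1 <= c <= 1) rs & root (legendre R n) =i rs].
Proof.
have [rs [srs ors brs rrs]] := derivn_rodrigues_roots (leqnn n).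
have urs : uniq rs by apply: lt_sorted_uniq.
have root_rs : all (root (legendre R n)) rs.
  by apply/allP => c /(allP rrs); rewrite legendre_rodrigues rootZ ?legendre_scale_neq0.
exists rs; split => //.
  by apply/allP => c /(allP brs) /andP[c1 c2]; rewrite !ltW.
move=> c; apply/idP/idP => [rc|/(allP root_rs)//]; apply: contraT => crs.
have root_crs : all (root (legendre R n)) (c :: rs) by apply/andP.
have := max_poly_roots (legendre_neq0 n) root_crs.
by rewrite /= crs urs size_legendre srs ltnn => /(_ isT).
Qed.

Lemma legendre_orthogonal n q : (size q <= n)%N ->
  poly_integral (-1) 1 (legendre R n * q) = 0.
Proof.
move=> sq; rewrite legendre_rodrigues -scalerAl poly_integralZ.
by rewrite poly_integral_derivn_rodriguesM // mulr0.
Qed.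

End Legendre.

Section LagrangeInterpolation.
Variables (F : fieldType) (xs : seq F).
Hypothesis xs_uniq : uniq xs.

Definition lagrange_poly x : {poly F} :=
  (\prod_(c <- rem x xs) (x - c))^-1 *: \prod_(c <- rem x xs) ('X - c%:P).

Lemma lagrange_poly_node x y : x \in xs -> y \in xs -> (lagrange_poly x).[y] = (y == x)%:R.
Proof.
move=> xxs yxs; rewrite hornerZ horner_prod.
under [X in _ * X]eq_bigr do rewrite hornerXsubC.
have [->|yx] := eqVneq y x.
  rewrite mulVf // prodf_seq_neq0; apply/allP => c cxs /=.
  by rewrite subr_eq0; apply: contraTneq cxs => <-; rewrite mem_rem_uniqF.
suff /eqP -> : \prod_(c <- rem x xs) (y - c) == 0 by rewrite mulr0.
by rewrite prodf_seq_eq0; apply/hasP; exists y; rewrite ?subrr ?eqxx // rem_mem.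
Qed.

Lemma size_lagrange_poly x : x \in xs -> (size (lagrange_poly x) <= size xs)%N.
Proof.
move=> xxs; rewrite (leq_trans (size_scale_leq _ _)) // size_prod_XsubC size_rem //.
by rewrite prednK //; case: (xs) xxs.
Qed.

Lemma lagrange_interpolation (p : {poly F}) : (size p <= size xs)%N ->
  p = \sum_(x <- xs) p.[x] *: lagrange_poly x.
Proof.
move=> sp; apply/eqP; rewrite -subr_eq0; apply: contraT => d_neq0.
set d := p - _ in d_neq0.
have size_d : (size d <= size xs)%N.
  rewrite (leq_trans (size_polyD _ _)) // size_polyN geq_max sp /=.
  apply: (leq_trans (size_sum _ _ _)); apply/bigmax_leqP_seq => x xxs _.
  exact: leq_trans (size_scale_leq _ _) (size_lagrange_poly xxs).
have root_d : all (root d) xs.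
  apply/allP => y yxs; apply/rootP; rewrite hornerD hornerN horner_sum.
  under eq_big_seq => x xxs do rewrite hornerZ lagrange_poly_node //.
  rewrite (bigD1_seq y) //= eqxx mulr1 big1 ?addr0 ?subrr // => x /negbTE.
  by rewrite eq_sym => ->; rewrite mulr0.
by have := max_poly_roots d_neq0 root_d xs_uniq; rewrite ltnNge size_d.
Qed.

End LagrangeInterpolation.

Lemma fsbig_seq_supp (R : eqType) (idx : R) (op : Monoid.com_law idx)
    (I : choiceType) (A : set I) (s : seq I) (F : I -> R) : uniq s ->
  (forall i, F i != idx -> i \in s) -> {in s, forall i, F i != idx -> A i} ->
  \big[op/idx]_(i \in A) F i = \big[op/idx]_(i <- s) F i.
Proof.
move=> s_uniq Fs sA.
rewrite -(fsbig_widen (A `&` [set` s]) A F) //; last first.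
  by move=> i [Ai nAs] /=; apply: contra_notP nAs => /eqP Fi; split => //=; exact: Fs.
rewrite (fsbig_fwiden s) // => i [/= si nAs]; apply: contra_notP nAs => /eqP Fi.
by split => //; exact: sA.
Qed.

Section GaussLegendre.
Variables (R : realType) (Q : nat) (rs : seq R).
Hypotheses (rs_uniq : uniq rs) (size_rs : size rs = Q)
  (rs_itv : all (fun c => -1 <= c <= 1) rs) (root_legendre : root (legendre R Q) =i rs).
Implicit Types (a b t x : R) (p : {poly R}).

Lemma gauss_legendre_exact p : (size p <= 2 * Q)%N ->
  poly_integral (-1) 1 p = \sum_(x <- rs) poly_integral (-1) 1 (lagrange_poly rs x) * p.[x].
Proof.
move=> sp; have P_neq0 := @legendre_neq0 R Q.
rewrite {1}(divp_eq p (legendre R Q)) poly_integralD [_ %/ _ * _]mulrC legendre_orthogonal ?add0r;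
  last by rewrite size_divp // size_legendre /= leq_subLR addnn -mul2n.
have size_mod : (size (p %% legendre R Q)%R <= size rs)%N.
  by rewrite size_rs -ltnS -(size_legendre R Q) ltn_modp.
rewrite {1}(lagrange_interpolation rs_uniq size_mod) poly_integral_sum.
apply: eq_big_seq => x xrs; rewrite poly_integralZ mulrC; congr (_ * _).
rewrite [in RHS](divp_eq p (legendre R Q)) hornerD hornerM.
by move: xrs; rewrite -root_legendre => /rootP ->; rewrite mulr0 add0r.
Qed.

Definition gl_node a b x := a + (b - a) * (x + 1) / 2.

Lemma gl_node_itv a b x : a <= b -> -1 <= x <= 1 -> a <= gl_node a b x <= b.
Proof. by rewrite /gl_node => ab /andP[x1 x2]; apply/andP; split; nra. Qed.

Lemma gl_nodeK a b x : a < b -> (2 * gl_node a b x - (a + b)) / (b - a) = x.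
Proof. by move=> ab; rewrite /gl_node; field; rewrite subr_eq0 gt_eqF. Qed.

Lemma glq_neq0 a b t : glq Q a b t != 0 -> a < b /\ t \in map (gl_node a b) rs.
Proof.
rewrite /glq /=; case: ifP => [/andP[ab root_t] _|_]; last by rewrite eqxx.
split => //; apply/mapP; exists ((2 * t - (a + b)) / (b - a)); first by rewrite -root_legendre.
by rewrite /gl_node; field; rewrite subr_eq0 gt_eqF.
Qed.

Lemma glq_neq0_itv a b t : glq Q a b t != 0 -> a <= t <= b.
Proof.
by case/glq_neq0 => ab /mapP[x xrs ->]; apply: gl_node_itv (ltW ab) (allP rs_itv x xrs).
Qed.

Lemma legendre_rootsD1 x : x \in rs -> @legendre_roots R Q `\ x = [set` rem x rs].
Proof.
move=> xrs; apply/seteqP; split => c /=; rewrite /legendre_roots mem_rem_uniq // inE.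
  by case=> rc /eqP cx; rewrite cx -root_legendre.
by case/andP => /eqP cx; rewrite -root_legendre.
Qed.

Lemma glq_gl_node a b x : a < b -> x \in rs ->
  glq Q a b (gl_node a b x) = (b - a) / 2 * poly_integral (-1) 1 (lagrange_poly rs x).
Proof.
move=> ab xrs; have ba_neq0 : b - a != 0 by rewrite subr_eq0 gt_eqF.
pose to_ref : {poly R} := (2 / (b - a)) *: 'X + (- (a + b) / (b - a))%:P.
have lagrange_ref y : \big[*%R/1]_(c \in @legendre_roots R Q `\ x)
    ((2 * y - (b - a) * c - (a + b)) / (2 * gl_node a b x - (b - a) * c - (a + b)))
    = (lagrange_poly rs x \Po to_ref).[y].
  rewrite legendre_rootsD1 // -fsbig_seq ?rem_uniq // horner_comp hornerZ horner_prod.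
  under [X in _ = _ * X]eq_bigr do rewrite hornerXsubC.
  rewrite [RHS]mulrC -prodf_div; apply: eq_big_seq => c crs.
  have xc_neq0 : x - c != 0.
    by rewrite subr_eq0; apply: contraTneq crs => <-; rewrite mem_rem_uniqF.
  rewrite /to_ref /gl_node !hornerE; field; rewrite xc_neq0 ba_neq0 /=.
  have -> : a * 2 + (b - a) * (x + 1) - (b - a) * c - (a + b) = (b - a) * (x - c) by ring.
  exact: mulf_neq0.
have root_x : root (legendre R Q) x by move: xrs; rewrite -root_legendre.
rewrite /glq gl_nodeK // ab root_x /=.
transitivity (Rintegral lebesgue_measure `[a, b] (horner (lagrange_poly rs x \Po to_ref))).
  by apply: eq_Rintegral => y _; exact: lagrange_ref.
rewrite Rintegral_horner // poly_integral_comp ?mulf_neq0 ?invr_eq0 //.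
by congr (_ * poly_integral _ _ _); field.
Qed.

Lemma glq_quadrature a b p : a <= b -> (size p <= 2 * Q)%N ->
  \sum_(t \in `[a, b]) glq Q a b t * p.[t] = poly_integral a b p.
Proof.
rewrite le_eqVlt => /orP[/eqP <-|ab] sp.
  by rewrite [RHS]subrr fsbig1 // => t _; rewrite /glq ltxx mul0r.
have ba_neq0 : b - a != 0 by rewrite subr_eq0 gt_eqF.
pose from_ref : {poly R} := ((b - a) / 2) *: 'X + ((a + b) / 2)%:P.
have from_ref_node x : from_ref.[x] = gl_node a b x by rewrite /from_ref /gl_node !hornerE; field.
rewrite (fsbig_seq_supp _ _ (s := map (gl_node a b) rs)).
- rewrite big_map; under eq_big_seq => x xrs do rewrite glq_gl_node //.
  have -> : poly_integral a b p = (b - a) / 2 * poly_integral (-1) 1 (p \Po from_ref).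
    rewrite poly_integral_comp ?mulf_neq0 ?invr_eq0 // mulrA mulfV ?mulf_neq0 ?invr_eq0 //.
    by rewrite mul1r; congr poly_integral; field.
  rewrite gauss_legendre_exact ?big_distrr; last first.
    have half_neq0 : (b - a) / 2 != 0 by rewrite mulf_neq0 ?invr_eq0.
    by rewrite size_comp_poly2 // size_polyDl size_scale ?size_polyX // size_polyC ltnS leq_b1.
  apply: eq_big_seq => x _ /=; rewrite horner_comp from_ref_node; ring.
- rewrite map_inj_uniq // => x y xy.
  by rewrite -[x](gl_nodeK _ ab) xy gl_nodeK.
- by move=> t /[1!mulf_eq0] /norP[/glq_neq0[_]].
- by move=> t _ /[1!mulf_eq0] /norP[/glq_neq0_itv t_itv _]; rewrite /= in_itv.
Qed.

Variable T : R.
Hypothesis T_ge0 : 0 <= T.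

Fixpoint qbar_nodes n : seq R :=
  if n is m.+1 then undup [seq gl_node s T x | s <- qbar_nodes m, x <- rs] else [:: 0].

Lemma qbar_nodes_uniq n : uniq (qbar_nodes n).
Proof. by case: n => [|n] /=; rewrite ?undup_uniq. Qed.

Lemma qbar_nodes_itv n s : s \in qbar_nodes n -> 0 <= s <= T.
Proof.
elim: n s => [|n IHn] s /=; first by rewrite inE => /eqP ->; rewrite lexx.
rewrite mem_undup => /allpairsP[[r x] [/= /IHn /andP[r_ge0 rT] xrs ->]].
have /andP[r_le ->] := gl_node_itv rT (allP rs_itv x xrs).
by rewrite (le_trans r_ge0).
Qed.

Lemma mem_qbar_nodesS n s t :
  s \in qbar_nodes n -> glq Q s T t != 0 -> t \in qbar_nodes n.+1.
Proof.
by move=> sn /glq_neq0[_ /mapP[x xrs ->]]; rewrite mem_undup; apply/allpairsP; exists (s, x).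
Qed.

Lemma qbar_supp n t : qbar T Q n t != 0 -> t \in qbar_nodes n.
Proof.
elim: n t => [|n IHn] t /=; first by case: (t =P 0) => [->|]; rewrite ?eqxx ?inE.
apply: contraNT => t_notin; apply/eqP/fsbig1 => s _.
have [->|/IHn sn] := eqVneq (qbar T Q n s) 0; first by rewrite mul0r.
have [->|/(mem_qbar_nodesS sn)] := eqVneq (glq Q s T t) 0; first by rewrite mulr0.
by rewrite (negbTE t_notin).
Qed.

Lemma fsbig_qbar n (F : R -> R) :
  \sum_(t \in `[0, T]) qbar T Q n t * F t = \sum_(t <- qbar_nodes n) qbar T Q n t * F t.
Proof.
apply: fsbig_seq_supp; rewrite ?qbar_nodes_uniq //.
  by move=> t /[1!mulf_eq0] /norP[/qbar_supp].
by move=> t /qbar_nodes_itv t_itv _; rewrite /= in_itv.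
Qed.

Lemma qbarS n t : qbar T Q n.+1 t = \sum_(s <- qbar_nodes n) qbar T Q n s * glq Q s T t.
Proof.
apply: fsbig_seq_supp; rewrite ?qbar_nodes_uniq //.
  by move=> s /[1!mulf_eq0] /norP[/qbar_supp].
move=> s /qbar_nodes_itv /andP[s_ge0 _] /[1!mulf_eq0] /norP[_ /glq_neq0_itv /andP[st _]].
by rewrite /= in_itv /= s_ge0.
Qed.

Lemma sum_glq_qbar_nodes n s (F : R -> R) : s \in qbar_nodes n ->
  \sum_(t <- qbar_nodes n.+1) glq Q s T t * F t = \sum_(t \in `[s, T]) glq Q s T t * F t.
Proof.
move=> sn; symmetry; apply: fsbig_seq_supp; rewrite ?qbar_nodes_uniq //.
  by move=> t /[1!mulf_eq0] /norP[/(mem_qbar_nodesS sn)].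
by move=> t _ /[1!mulf_eq0] /norP[/glq_neq0_itv t_itv _]; rewrite /= in_itv.
Qed.

Lemma qbar_divided_pow n k : (n + k < 2 * Q)%N ->
  \sum_(t \in `[0, T]) qbar T Q n t * (divided_pow T k).[t] = (divided_pow T (n + k)).[0].
Proof.
elim: n k => [|n IHn] k nk.
  by rewrite fsbig_qbar big_seq1 /= eqxx mul1r.
rewrite fsbig_qbar; under eq_bigr do rewrite qbarS big_distrl /=.
rewrite exchange_big /= addSnnS -IHn -?addSnnS // fsbig_qbar.
apply: eq_big_seq => s sn; under eq_bigr do rewrite -mulrA.
have /andP[_ sT] := qbar_nodes_itv sn.
rewrite -big_distrr /= sum_glq_qbar_nodes // glq_quadrature // ?poly_integral_divided_pow //.
by rewrite (leq_trans (size_divided_pow _ _)) //; lia.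
Qed.

End GaussLegendre.

Unset Implicit Arguments.

Theorem lemma3p2 (R : realType) (T : R) (Q : nat) :
  0 < T -> (0 < Q)%N ->
  forall n k : nat, (k < 2 * Q - n)%N ->
    \sum_(t \in `[0, T]) (qbar T Q n t * ((T - t) ^+ k / (k`!)%:R))
    = T ^+ (n + k) / ((n + k)`!)%:R.
Proof.
move=> T_gt0 _ n k nk.
have [rs [rs_uniq size_rs rs_itv root_legendre]] := legendre_roots_spec R Q.
under eq_fsbigr do rewrite -horner_divided_pow.
rewrite (qbar_divided_pow rs_uniq size_rs rs_itv root_legendre (ltW T_gt0)); last by lia.
by rewrite horner_divided_pow subr0.
Qed.
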